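(* Let $V$ be a toroidal vertex algebra and let $(W,Y_W)$ be a $V$-module. Then for every $v\in V$ and $(m_0,\mathbf{m})\in\mathbb{Z}\times\mathbb{Z}^r$, $$Y_W(v_{m_0,\mathbf{m}}\mathbf{1};x_0,\mathbf{x})\in \mathbf{x}^{-\mathbf{m}}\,\mathcal{E}(W),$$ and $$Y_W(v;x_0,\mathbf{x})=\sum_{\mathbf{m}\in\mathbb{Z}^r}Y_W(v_{-1,\mathbf{m}}\mathbf{1};x_0,\mathbf{x}).$$ For $u\in V^0$ set $Y_W^0(u,x_0)=Y_W(u;x_0,\mathbf{x})|_{\mathbf{x}=1}\in\mathcal{E}(W)$. Then $(W,Y_W^0)$ is a module for $V^0$ viewed as a vertex algebra (with vertex operator map $Y^0$). Furthermore, if $(W,Y_W)$ is an irreducible $V$-module, then $(W,Y_W^0)$ is an irreducible module for the vertex algebra $V^0$.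
   Context: Fix a positive integer $r$. Write $\mathbf{x}=(x_1,\dots,x_r)$ and $\mathbf{x}^{\mathbf{m}}=x_1^{m_1}\cdots x_r^{m_r}$ for $\mathbf{m}\in\mathbb{Z}^r$ (similarly for other variables), and $\mathbf{z}\mathbf{y}=(z_1y_1,\dots,z_ry_r)$. For a vector space $W$ put $\mathcal{E}(W,r)=\mathrm{Hom}(W,W[[x_1^{\pm1},\dots,x_r^{\pm1}]]((x_0)))$ and $\mathcal{E}(W)=\mathrm{Hom}(W,W((x_0)))$. A toroidal vertex algebra is a vector space $V$ with a linear map $Y(\cdot;x_0,\mathbf{x}):V\to\mathcal{E}(V,r)$, $v\mapsto\sum_{(m_0,\mathbf{m})\in\mathbb{Z}\times\mathbb{Z}^r}v_{m_0,\mathbf{m}}x_0^{-m_0-1}\mathbf{x}^{-\mathbf{m}}$, and a vector $\mathbf{1}\in V$ such that $Y(\mathbf{1};x_0,\mathbf{x})v=v$ and $Y(v;x_0,\mathbf{x})\mathbf{1}\in V[[x_0,x_1^{\pm1},\dots,x_r^{\pm1}]]$ for all $v\in V$, and for all $u,v\in V$ $$z_0^{-1}\delta\!\left(\tfrac{x_0-y_0}{z_0}\right)Y(u;x_0,\mathbf{z}\mathbf{y})Y(v;y_0,\mathbf{y})-z_0^{-1}\delta\!\left(\tfrac{y_0-x_0}{-z_0}\right)Y(v;y_0,\mathbf{y})Y(u;x_0,\mathbf{z}\mathbf{y})=y_0^{-1}\delta\!\left(\tfrac{x_0-z_0}{y_0}\right)Y(Y(u;z_0,\mathbf{z})v;y_0,\mathbf{y}),$$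 where $Y(u;x_0,\mathbf{z}\mathbf{y})=\sum u_{m_0,\mathbf{m}}x_0^{-m_0-1}\mathbf{z}^{-\mathbf{m}}\mathbf{y}^{-\mathbf{m}}$. A $V$-module is a vector space $W$ with a linear map $Y_W(\cdot;x_0,\mathbf{x}):V\to\mathcal{E}(W,r)$ with $Y_W(\mathbf{1};x_0,\mathbf{x})=1_W$ satisfying the same Jacobi identity with $Y$ replaced by $Y_W$ in the three outer operator places (the inner $Y(u;z_0,\mathbf{z})v$ remaining the algebra's). For a toroidal vertex algebra $V$, $V^0=\mathrm{span}\{v_{m_0,\mathbf{m}}\mathbf{1}\mid v\in V,(m_0,\mathbf{m})\in\mathbb{Z}\times\mathbb{Z}^r\}$; it is a toroidal vertex subalgebra, $Y(v;x_0,\mathbf{x})\in\mathcal{E}(V)[x_1^{\pm1},\dots,x_r^{\pm1}]$ for $v\in V^0$, and with $Y^0(v,x_0)=Y(v;x_0,\mathbf{x})|_{\mathbf{x}=1}$ the triple $(V^0,Y^0,\mathbf{1})$ is a vertex algebra. *)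

From HB Require Import structures.
From mathcomp Require Import all_boot all_order all_algebra.
Set Implicit Arguments. Unset Strict Implicit. Unset Printing Implicit Defensive.
Import Order.TTheory GRing.Theory Num.Theory.
Local Open Scope ring_scope.

(* A map  Y : V -> E(W,r)  is encoded by its modes:
     Y v m0 m w  =  v_{m0,m} w,  where
     Y(v;x0,x) w = sum_{m0,m} v_{m0,m} w x0^{-m0-1} x^{-m}.
   A map  Y : V -> E(W)  (ordinary vertex operators) is encoded by
     Y v n w = v_n w. *)

Section Defs.
Variable K : fieldType.

(* generalized binomial coefficient  binom(k, i)  for k : int, i : nat,
   as an integer: binom(-(n+1), i) = (-1)^i binom(n+i, i). *)
Definition binz (k : int) (i : nat) : int :=
  match k with
  | Posz n => ('C(n, i))%:Z
  | Negz n => (-1) ^+ i * ('C(n + i, i))%:Z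
  end.

Definition bin (k : int) (i : nat) : K := (binz k i)%:~R.

Definition is_fsum (r : nat) (W : lmodType K) (f : 'rV[int]_r -> W) (x : W)
  : Prop :=
  exists s : seq 'rV[int]_r,
    [/\ uniq s, (forall m, m \notin s -> f m = 0) & x = \sum_(m <- s) f m].

Section Toroidal.
Variable r : nat.
Variable V : lmodType K.
Variable Y : V -> int -> 'rV[int]_r -> V -> V.
Variable one : V.

(* Y_W : V -> E(W,r) is linear (in v and in w) with values in
   W[[x_1^{+-1},...,x_r^{+-1}]]((x0)) *)
Definition toroidal_field_map (W : lmodType K)
  (YW : V -> int -> 'rV[int]_r -> W -> W) : Prop :=
  [/\ (forall a u1 u2 n m w, YW (a *: u1 + u2) n m w = a *: YW u1 n m w + YW u2 n m w),
      (forall u n m a w1 w2, YW u n m (a *: w1 + w2) = a *: YW u n m w1 + YW u n m w2)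
    & (forall u w, exists N : int, forall n m, N <= n -> YW u n m w = 0)].

(* The toroidal Jacobi identity for outer operators YW and inner operator Y,
   written coefficientwise: coefficient of
   x0^{-p-1} y0^{-q-1} z0^{-s-1} z^{-m} y^{-n} applied to w.
   The (a priori infinite) sums over i are finite by truncation; we require
   equality of the partial sums up to any N beyond which all terms vanish. *)
Definition toroidal_jacobi (W : lmodType K)
  (YW : V -> int -> 'rV[int]_r -> W -> W) : Prop :=
  forall (u v : V) (w : W) (p q s : int) (m n : 'rV[int]_r) (N : nat),
    let T1 i := ((-1) ^+ i * bin s i) *: YW u (p + s - i%:Z) m (YW v (q + i%:Z) (n - m) w) in
    let T2 i := ((-1) ^+ i * bin s i) *: YW v (q + s - i%:Z) (n - m) (YW u (p + i%:Z) m w) in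
    let R  i := bin p i *: YW (Y u (s + i%:Z) m v) (p + q - i%:Z) n w in
    (forall i : nat, (N <= i)%N -> [/\ T1 i = 0, T2 i = 0 & R i = 0]) ->
    \sum_(i < N) T1 i - (-1) ^ s *: \sum_(i < N) T2 i = \sum_(i < N) R i.

Definition toroidal_vertex_algebra : Prop :=
  [/\ toroidal_field_map Y,
      (forall n m v, Y one n m v = if (n == -1) && (m == 0) then v else 0),
      (forall v n m, 0 <= n -> Y v n m one = 0)
    & toroidal_jacobi Y].

Definition toroidal_module (W : lmodType K)
  (YW : V -> int -> 'rV[int]_r -> W -> W) : Prop :=
  [/\ toroidal_field_map YW,
      (forall n m w, YW one n m w = if (n == -1) && (m == 0) then w else 0)
    & toroidal_jacobi YW].

Definition in_V0 (u : V) : Prop :=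
  exists s : seq (K * V * int * 'rV[int]_r),
    u = \sum_(t <- s) t.1.1.1 *: Y t.1.1.2 t.1.2 t.2 one.

Definition subspace (W : lmodType K) (U : W -> Prop) : Prop :=
  U 0 /\ forall a x y, U x -> U y -> U (a *: x + y).

Definition toroidal_irreducible (W : lmodType K)
  (YW : V -> int -> 'rV[int]_r -> W -> W) : Prop :=
  (exists w : W, w <> 0) /\
  forall U : W -> Prop, subspace U ->
    (forall v n m w, U w -> U (YW v n m w)) ->
    (forall w, U w -> w = 0) \/ (forall w, U w).
End Toroidal.

Section VA.
(* A vertex algebra structure (Y0, one) on a subspace P of V, and its
   modules: YW is only required/used on elements of P. *)
Variable V : lmodType K.
Variable P : V -> Prop.
Variable Y0 : V -> int -> V -> V.
Variable one : V.

Definition va_module (W : lmodType K) (YW : V -> int -> W -> W) : Prop :=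
  [/\ (forall a u1 u2 n w, P u1 -> P u2 ->
          YW (a *: u1 + u2) n w = a *: YW u1 n w + YW u2 n w),
      (forall u n a w1 w2, P u -> YW u n (a *: w1 + w2) = a *: YW u n w1 + YW u n w2),
      (forall u w, P u -> exists N : int, forall n, N <= n -> YW u n w = 0),
      (forall n w, YW one n w = if n == -1 then w else 0)
    & (forall (u v : V) (w : W) (p q s : int) (N : nat), P u -> P v ->
        let T1 i := ((-1) ^+ i * bin s i) *: YW u (p + s - i%:Z) (YW v (q + i%:Z) w) in
        let T2 i := ((-1) ^+ i * bin s i) *: YW v (q + s - i%:Z) (YW u (p + i%:Z) w) in
        let R  i := bin p i *: YW (Y0 u (s + i%:Z) v) (p + q - i%:Z) w in
        (forall i : nat, (N <= i)%N -> [/\ T1 i = 0, T2 i = 0 & R i = 0]) ->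
        \sum_(i < N) T1 i - (-1) ^ s *: \sum_(i < N) T2 i = \sum_(i < N) R i)].

Definition va_irreducible (W : lmodType K) (YW : V -> int -> W -> W) : Prop :=
  (exists w : W, w <> 0) /\
  forall U : W -> Prop, subspace U ->
    (forall u n w, P u -> U w -> U (YW u n w)) ->
    (forall w, U w -> w = 0) \/ (forall w, U w).
End VA.
End Defs.

From HB Require Import structures.
From mathcomp Require Import all_boot all_order all_algebra.
From mathcomp Require Import zify.
From Stdlib Require Import ClassicalEpsilon.
Set Implicit Arguments. Unset Strict Implicit. Unset Printing Implicit Defensive.
Import Order.TTheory GRing.Theory Num.Theory.
Local Open Scope ring_scope.

(* The Jacobi identity with p = 0 has only the term i = 0 on its right-hand
   side, so (u_{s,m} v)_{q,n} vanishes on W as soon as all modes of v of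
   toroidal degree n - m do.  With v = 1 this gives the first statement; the
   Jacobi identity for the pair (v, 1) with p = n + 1 and q = s = -1 shows that
   v_{-1,k} 1 and v act identically in toroidal degree k.  Hence the toroidal
   modes of an element of V^0 have a finite support independent of the module,
   the specialization x = 1 is a finite sum, and the Jacobi identity for V^0 on
   W is the toroidal one summed over m in supp u and n in supp u + supp v. *)

Section FieldMap.
Variables (K : fieldType) (r : nat) (V W : lmodType K).
Variable YW : V -> int -> 'rV[int]_r -> W -> W.
Hypothesis HF : toroidal_field_map YW.

Lemma field_mapDl u1 u2 n m w : YW (u1 + u2) n m w = YW u1 n m w + YW u2 n m w.
Proof. by case: HF => linl _ _; have := linl 1 u1 u2 n m w; rewrite !scale1r. Qed.

Lemma field_mapDr u n m w1 w2 : YW u n m (w1 + w2) = YW u n m w1 + YW u n m w2.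
Proof. by case: HF => _ linr _; have := linr u n m 1 w1 w2; rewrite !scale1r. Qed.

Lemma field_map0l n m w : YW 0 n m w = 0.
Proof. by apply/esym/(addrI (YW 0 n m w)); rewrite addr0 -field_mapDl addr0. Qed.

Lemma field_map0r u n m : YW u n m 0 = 0.
Proof. by apply/esym/(addrI (YW u n m 0)); rewrite addr0 -field_mapDr addr0. Qed.

Lemma field_mapZl a u n m w : YW (a *: u) n m w = a *: YW u n m w.
Proof.
by case: HF => linl _ _; have := linl a u 0 n m w; rewrite !addr0 field_map0l addr0.
Qed.

Lemma field_map_suml (I : Type) (s : seq I) (F : I -> V) n m w :
  YW (\sum_(i <- s) F i) n m w = \sum_(i <- s) YW (F i) n m w.
Proof.
elim: s => [|x s IH]; first by rewrite !big_nil field_map0l.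
by rewrite !big_cons field_mapDl IH.
Qed.

Lemma field_map_sumr (I : Type) (s : seq I) (F : I -> W) u n m :
  YW u n m (\sum_(i <- s) F i) = \sum_(i <- s) YW u n m (F i).
Proof.
elim: s => [|x s IH]; first by rewrite !big_nil field_map0r.
by rewrite !big_cons field_mapDr IH.
Qed.

End FieldMap.

Lemma bin_r0 (K : fieldType) (k : int) : bin K k 0 = 1.
Proof. by case: k => n; rewrite /bin /binz ?expr0 ?mul1r ?addn0 ?bin0. Qed.

Lemma bin_0r (K : fieldType) (i : nat) : (0 < i)%N -> bin K 0 i = 0.
Proof. by case: i => // i _; rewrite /bin /binz bin0n. Qed.

Lemma big_ord_widen_vanish (X : zmodType) (N N' : nat) (F : nat -> X) :
  (N <= N')%N -> (forall i, (N <= i)%N -> F i = 0) ->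
  \sum_(i < N') F i = \sum_(i < N) F i.
Proof.
move=> NN' F0; rewrite -!(big_mkord xpredT) (big_cat_nat _ (n := N)) //=.
by rewrite [X in _ + X]big_nat_cond [X in _ + X]big1 ?addr0 // => i /andP[/andP[/F0]].
Qed.

Section FiniteSums.
Variables (r : nat) (X : zmodType).

Definition supp_in (f : 'rV[int]_r -> X) (s : seq 'rV[int]_r) :=
  forall m, m \notin s -> f m = 0.

Lemma supp_in_sub f s1 s2 : supp_in f s1 -> {subset s1 <= s2} -> supp_in f s2.
Proof. by move=> f0 sub m m_s2; apply: f0; apply: contra m_s2; apply: sub. Qed.

Lemma big_supp_in f s1 s2 : uniq s1 -> uniq s2 -> supp_in f s1 -> supp_in f s2 ->
  \sum_(m <- s1) f m = \sum_(m <- s2) f m.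
Proof.
move=> u1 u2 f1 f2.
have filter_supp sa sb : supp_in f sb ->
    \sum_(m <- sa) f m = \sum_(m <- [seq x <- sa | x \in sb]) f m.
  move=> fb; rewrite big_filter [in RHS]big_mkcond; apply: eq_bigr => m _.
  by case: ifP => // /negbT /fb.
rewrite (filter_supp s1 s2 f2) (filter_supp s2 s1 f1); apply: perm_big.
by apply: uniq_perm; rewrite ?filter_uniq // => x; rewrite !mem_filter andbC.
Qed.

End FiniteSums.

Lemma is_fsumP (K : fieldType) (r : nat) (W : lmodType K) (f : 'rV[int]_r -> W) x s :
  uniq s -> supp_in f s -> is_fsum f x <-> x = \sum_(m <- s) f m.
Proof.
move=> us fs; split; last by move->; exists s.
by case=> s0 [u0 f0 ->]; apply: big_supp_in.
Qed.

(* The mode n of Y_W(u; x0, x)|_{x = 1}; it is junk unless the toroidal modes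
   of u on w have finite support. *)
Definition sum_modes (K : fieldType) (r : nat) (V W : lmodType K)
  (YW : V -> int -> 'rV[int]_r -> W -> W) (u : V) (n : int) (w : W) : W :=
  epsilon (inhabits 0) (is_fsum (fun m => YW u n m w)).

Lemma sum_modesE (K : fieldType) (r : nat) (V W : lmodType K)
  (YW : V -> int -> 'rV[int]_r -> W -> W) u n w s :
  uniq s -> supp_in (fun m => YW u n m w) s ->
  sum_modes YW u n w = \sum_(m <- s) YW u n m w.
Proof.
move=> us hs; have ex : exists x, is_fsum (fun m => YW u n m w) x.
  by exists (\sum_(m <- s) YW u n m w); exists s.
by have /(is_fsumP _ us hs) := epsilon_spec (inhabits 0) _ ex.
Qed.

Section ToroidalModule.
Variables (K : fieldType) (r : nat) (V : lmodType K).
Variables (Y : V -> int -> 'rV[int]_r -> V -> V) (one : V).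
Hypothesis HV : toroidal_vertex_algebra Y one.
Variables (W : lmodType K) (YW : V -> int -> 'rV[int]_r -> W -> W).
Hypothesis HW : toroidal_module Y one YW.

Let HF : toroidal_field_map YW. Proof. by case: HW. Qed.

Lemma YW_mode_eq0 u v m n :
  (forall j x, YW v j (n - m) x = 0) -> forall s q w, YW (Y u s m v) q n w = 0.
Proof.
move=> v0 s q w; case: HW => _ _ jac.
have := jac u v w 0 q s m n 1%N; cbv beta zeta.
rewrite !big_ord1 /= !v0 (field_map0r HF) !scaler0 subr0 bin_r0 scale1r addr0 !add0r subr0.
move=> <- // i i_gt0.
by rewrite !v0 (field_map0r HF) !scaler0 bin_0r // scale0r.
Qed.

Lemma YW_vacuum_mode_eq0 v m0 m n k w : k != m -> YW (Y v m0 m one) n k w = 0.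
Proof.
move=> km; apply: YW_mode_eq0 => j x; case: HW => _ vac _.
by rewrite vac subr_eq0 (negbTE km) andbF.
Qed.

Lemma YW_creation v n k w : YW (Y v (-1) k one) n k w = YW v n k w.
Proof.
case: HV => _ _ creation _; case: HW => _ vac jac.
have := jac v one w (n + 1) (-1) (-1) k k 1%N; cbv beta zeta.
rewrite !big_ord1 /= subrr !vac eqxx ?andbT.
have -> : (-1 + -1 - 0%:Z == -1 :> int) = false by apply/negbTE/eqP; lia.
rewrite scaler0 subr0 !bin_r0 expr0 mul1r !scale1r addrK.
rewrite addr0.
move=> <-; rewrite ?eqxx ?scaler0 ?subr0 // => i i_gt0; rewrite !vac eqxx !andbT.
have -> : (-1 + i%:Z == -1 :> int) = false by apply/negbTE/eqP; lia.
have -> : (-1 + -1 - i%:Z == -1 :> int) = false by apply/negbTE/eqP; lia.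
by rewrite (field_map0r HF) !scaler0 creation ?(field_map0l HF) ?scaler0 //; lia.
Qed.

Lemma toroidal_jacobi_eventually (u v : V) (w : W) (p q s : int) :
  exists N0 : nat, forall (N : nat) (m n : 'rV[int]_r), (N0 <= N)%N ->
    \sum_(i < N) (((-1) ^+ i * bin K s i) *: YW u (p + s - i%:Z) m (YW v (q + i%:Z) (n - m) w))
    - (-1) ^ s *: \sum_(i < N) (((-1) ^+ i * bin K s i) *: YW v (q + s - i%:Z) (n - m) (YW u (p + i%:Z) m w))
    = \sum_(i < N) (bin K p i *: YW (Y u (s + i%:Z) m v) (p + q - i%:Z) n w).
Proof.
case: HV => [[_ _ truncY] _ _ _]; case: HW => [[_ _ truncW] _ jac].
have [Nu u0] := truncW u w; have [Nv v0] := truncW v w; have [NY Y0] := truncY u v.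
exists (`|Nu - p| + `|Nv - q| + `|NY - s|)%N => N m n N0N.
apply: (jac u v w p q s m n N) => i Ni.
rewrite v0 ?(u0 (p + i%:Z)) ?Y0; try lia.
by rewrite !(field_map0r HF) (field_map0l HF) !scaler0.
Qed.

End ToroidalModule.

Section ModesSupport.
Variables (K : fieldType) (r : nat) (V : lmodType K).
Variables (Y : V -> int -> 'rV[int]_r -> V -> V) (one : V).

Definition modes_supp (u : V) (S : seq 'rV[int]_r) : Prop :=
  forall (W' : lmodType K) (YW' : V -> int -> 'rV[int]_r -> W' -> W'),
    toroidal_module Y one YW' -> forall j x, supp_in (fun m => YW' u j m x) S.

Lemma in_V0_modes_supp u : in_V0 Y one u -> exists2 S, uniq S & modes_supp u S.
Proof.
case=> s ->; exists (undup [seq t.2 | t <- s]); first exact: undup_uniq.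
move=> W' YW' HW' j x m m_S /=; have [HF' _ _] := HW'.
rewrite (field_map_suml HF'); apply: big1_seq => t ts.
rewrite (field_mapZl HF') (YW_vacuum_mode_eq0 HW') ?scaler0 //.
by apply: contra m_S => /eqP ->; rewrite mem_undup map_f.
Qed.

Section ModesAtOne.
Hypothesis HV : toroidal_vertex_algebra Y one.
Variables (W : lmodType K) (YW : V -> int -> 'rV[int]_r -> W -> W).
Hypothesis HW : toroidal_module Y one YW.

Let HF : toroidal_field_map YW. Proof. by case: HW. Qed.

Let module_V : toroidal_module Y one Y. Proof. by case: HV => *; split. Qed.

Lemma sum_modes_fsum u n w :
  in_V0 Y one u -> is_fsum (fun m => YW u n m w) (sum_modes YW u n w).
Proof.
case/in_V0_modes_supp=> S uS suppS.
by apply/(is_fsumP _ uS (suppS _ _ HW n w)); apply: sum_modesE (suppS _ _ HW n w).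
Qed.

Lemma sum_modes_creation v m n w : sum_modes YW (Y v (-1) m one) n w = YW v n m w.
Proof.
rewrite (sum_modesE (s := [:: m])) ?big_seq1 ?(YW_creation HV HW) // => k.
by rewrite inE => km; apply: (YW_vacuum_mode_eq0 HW).
Qed.

Section JacobiAtOne.
Variables (u v : V) (Su Sv : seq 'rV[int]_r).
Hypotheses (uniq_Su : uniq Su) (uniq_Sv : uniq Sv).
Hypotheses (supp_u : modes_supp u Su) (supp_v : modes_supp v Sv).

Let Nset := undup [seq a + b | a <- Su, b <- Sv].

Let uniq_Nset : uniq Nset. Proof. exact: undup_uniq. Qed.

Let mem_Nset a b : a \in Su -> b \in Sv -> a + b \in Nset.
Proof. by move=> a_Su b_Sv; rewrite mem_undup; apply/allpairsP; exists (a, b). Qed.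

Lemma sum_modes_shift m j x :
  m \in Su -> \sum_(n <- Nset) YW v j (n - m) x = sum_modes YW v j x.
Proof.
move=> m_Su; rewrite (sum_modesE (s := [seq n - m | n <- Nset])) ?big_map //.
  by rewrite map_inj_uniq // => a b /(congr1 (+%R^~ m)); rewrite !subrK.
move=> k k_notin; have [k_Sv|] := boolP (k \in Sv); last exact: supp_v.
case/negP: k_notin; apply/mapP; exists (m + k); first exact: mem_Nset.
by rewrite addrC addKr.
Qed.

Lemma sum_modes_comp_uv a b w : sum_modes YW u a (sum_modes YW v b w)
  = \sum_(m <- Su) \sum_(n <- Nset) YW u a m (YW v b (n - m) w).
Proof.
rewrite (sum_modesE uniq_Su (supp_u HW _ _)); apply: eq_big_seq => m m_Su.
by rewrite -(sum_modes_shift _ _ m_Su) (field_map_sumr HF).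
Qed.

Lemma sum_modes_comp_vu a b w : sum_modes YW v b (sum_modes YW u a w)
  = \sum_(m <- Su) \sum_(n <- Nset) YW v b (n - m) (YW u a m w).
Proof.
rewrite (sum_modesE uniq_Su (supp_u HW _ _)) (sum_modesE uniq_Sv (supp_v HW _ _)).
under eq_bigr do rewrite (field_map_sumr HF).
rewrite exchange_big; apply: eq_big_seq => m m_Su.
by rewrite (sum_modes_shift _ _ m_Su) (sum_modesE uniq_Sv (supp_v HW _ _)).
Qed.

Lemma sum_modes_mode_sum j c w y :
  is_fsum (fun m => Y u j m v) y ->
  sum_modes YW y c w = \sum_(m <- Su) \sum_(n <- Nset) YW (Y u j m v) c n w.
Proof.
move/(is_fsumP _ uniq_Su (supp_u module_V _ _)) => ->.
rewrite (sum_modesE (s := Nset)) //; last first.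
  move=> n n_notin /=; rewrite (field_map_suml HF); apply: big1_seq => m m_Su.
  apply: (YW_mode_eq0 HW) => k x; apply: (supp_v HW); apply: contraNN n_notin.
  by move/(mem_Nset m_Su); rewrite addrC subrK.
by rewrite exchange_big; apply: eq_bigr => n _; rewrite (field_map_suml HF).
Qed.

Lemma sum_modes_jacobi (Y0 : V -> int -> V -> V)
    (Y0_uv : forall j, is_fsum (fun m => Y u j m v) (Y0 u j v))
    (w : W) (p q s : int) (N : nat) :
  let T1 i := ((-1) ^+ i * bin K s i) *:
    sum_modes YW u (p + s - i%:Z) (sum_modes YW v (q + i%:Z) w) in
  let T2 i := ((-1) ^+ i * bin K s i) *:
    sum_modes YW v (q + s - i%:Z) (sum_modes YW u (p + i%:Z) w) in
  let R i := bin K p i *: sum_modes YW (Y0 u (s + i%:Z) v) (p + q - i%:Z) w in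
  (forall i : nat, (N <= i)%N -> [/\ T1 i = 0, T2 i = 0 & R i = 0]) ->
  \sum_(i < N) T1 i - (-1) ^ s *: \sum_(i < N) T2 i = \sum_(i < N) R i.
Proof.
move=> T1 T2 R vanish.
have vanish1 i : (N <= i)%N -> T1 i = 0 by case/vanish.
have vanish2 i : (N <= i)%N -> T2 i = 0 by case/vanish.
have vanish3 i : (N <= i)%N -> R i = 0 by case/vanish.
have [N0 jac] := toroidal_jacobi_eventually HV HW u v w p q s.
rewrite -(big_ord_widen_vanish (leq_maxl N N0) vanish1).
rewrite -(big_ord_widen_vanish (leq_maxl N N0) vanish2).
rewrite -(big_ord_widen_vanish (leq_maxl N N0) vanish3).
have scale_double c (F : 'rV[int]_r -> 'rV[int]_r -> W) :
    c *: \sum_(m <- Su) \sum_(n <- Nset) F m n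
    = \sum_(m <- Su) \sum_(n <- Nset) c *: F m n.
  by rewrite scaler_sumr; under eq_bigr do rewrite scaler_sumr.
have sum_ord_inside (F : 'I_(maxn N N0) -> 'rV[int]_r -> 'rV[int]_r -> W) :
    \sum_(i < maxn N N0) \sum_(m <- Su) \sum_(n <- Nset) F i m n
    = \sum_(m <- Su) \sum_(n <- Nset) \sum_(i < maxn N N0) F i m n.
  by rewrite exchange_big; apply: eq_bigr => m _; rewrite exchange_big.
rewrite /T1 /T2 /R.
under eq_bigr do rewrite sum_modes_comp_uv scale_double.
under [in X in _ - _ *: X]eq_bigr do rewrite sum_modes_comp_vu scale_double.
under [in RHS]eq_bigr do rewrite (sum_modes_mode_sum _ _ (Y0_uv _)) scale_double.
rewrite !sum_ord_inside scale_double -sumrB; apply: eq_bigr => m _.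
by rewrite -sumrB; apply: eq_bigr => n _; apply: jac; apply: leq_maxr.
Qed.

End JacobiAtOne.

Lemma sum_modes_linearl a u1 u2 n w : in_V0 Y one u1 -> in_V0 Y one u2 ->
  sum_modes YW (a *: u1 + u2) n w = a *: sum_modes YW u1 n w + sum_modes YW u2 n w.
Proof.
case/in_V0_modes_supp=> S1 _ supp1; case/in_V0_modes_supp=> S2 _ supp2.
have uS : uniq (undup (S1 ++ S2)) by exact: undup_uniq.
have sub1 : {subset S1 <= undup (S1 ++ S2)} by move=> m; rewrite mem_undup mem_cat => ->.
have sub2 : {subset S2 <= undup (S1 ++ S2)}.
  by move=> m; rewrite mem_undup mem_cat => ->; rewrite orbT.
have supp1' := supp_in_sub (supp1 _ _ HW n w) sub1.
have supp2' := supp_in_sub (supp2 _ _ HW n w) sub2.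
have [linl _ _] := HF.
rewrite !(sum_modesE uS) //; last by move=> m m_S /=; rewrite linl supp1' ?supp2' ?scaler0 ?addr0.
by rewrite scaler_sumr -big_split; apply: eq_bigr => m _; rewrite linl.
Qed.

Lemma sum_modes_linearr u n a w1 w2 : in_V0 Y one u ->
  sum_modes YW u n (a *: w1 + w2) = a *: sum_modes YW u n w1 + sum_modes YW u n w2.
Proof.
case/in_V0_modes_supp=> S uS suppS; have [_ linr _] := HF.
rewrite !(sum_modesE uS (suppS _ _ HW n _)) scaler_sumr -big_split.
by apply: eq_bigr => m _; rewrite linr.
Qed.

Lemma sum_modes_vacuum n w : sum_modes YW one n w = if n == -1 then w else 0.
Proof.
have [_ vac _] := HW.
rewrite (sum_modesE (s := [:: 0])) ?big_seq1 ?vac ?eqxx ?andbT // => m.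
by rewrite inE /= vac => /negbTE ->; rewrite andbF.
Qed.

Lemma va_module_sum_modes (Y0 : V -> int -> V -> V) :
  (forall u, in_V0 Y one u -> forall n v, is_fsum (fun m => Y u n m v) (Y0 u n v)) ->
  va_module (in_V0 Y one) Y0 one (sum_modes YW).
Proof.
move=> HY0; split.
- by move=> *; apply: sum_modes_linearl.
- by move=> *; apply: sum_modes_linearr.
- move=> u w _; have [_ _ /(_ u w) [N0 trunc]] := HF; exists N0 => n N0n.
  by rewrite (sum_modesE (s := [::])) ?big_nil // => m _; apply: trunc.
- exact: sum_modes_vacuum.
move=> u v w p q s N V0u V0v.
have [Su uSu supp_u] := in_V0_modes_supp V0u.
have [Sv uSv supp_v] := in_V0_modes_supp V0v.
exact: sum_modes_jacobi uSu uSv supp_u supp_v _ (HY0 u V0u ^~ v) w p q s N.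
Qed.

Lemma va_irreducible_sum_modes :
  toroidal_irreducible YW -> va_irreducible (in_V0 Y one) (sum_modes YW).
Proof.
case=> nontrivial irr; split=> // U subU closed; apply: irr => // v n m w Uw.
rewrite -(sum_modes_creation v m n w); apply: closed => //.
by exists [:: (1, v, -1, m)]; rewrite big_seq1 scale1r.
Qed.

End ModesAtOne.

End ModesSupport.

Theorem proposition2p6 (K : fieldType) (charK : [pchar K] =i pred0)
  (r : nat) (V : lmodType K) (Y : V -> int -> 'rV[int]_r -> V -> V) (one : V)
  (HV : toroidal_vertex_algebra Y one)
  (W : lmodType K) (YW : V -> int -> 'rV[int]_r -> W -> W)
  (HW : toroidal_module Y one YW)
  (Y0 : V -> int -> V -> V)
  (HY0 : forall u, in_V0 Y one u -> forall n v,
           is_fsum (fun m => Y u n m v) (Y0 u n v)) :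
  (forall v m0 m n k w, k != m -> YW (Y v m0 m one) n k w = 0) /\
  (forall v n k w, is_fsum (fun m => YW (Y v (-1) m one) n k w) (YW v n k w)) /\
  (exists Y0W : V -> int -> W -> W,
     [/\ (forall u, in_V0 Y one u -> forall n w,
            is_fsum (fun m => YW u n m w) (Y0W u n w)),
         va_module (in_V0 Y one) Y0 one Y0W
       & (toroidal_irreducible YW -> va_irreducible (in_V0 Y one) Y0W)]).
Proof.
split; first by move=> *; apply: (YW_vacuum_mode_eq0 HW).
split.
  move=> v n k w; exists [:: k]; rewrite big_seq1 (YW_creation HV HW); split=> // m.
  by rewrite inE eq_sym; apply: (YW_vacuum_mode_eq0 HW).
exists (sum_modes YW); split.
- by move=> u V0u n w; apply: (sum_modes_fsum HW).
- exact: (va_module_sum_modes HV HW HY0).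
- exact: (va_irreducible_sum_modes HV HW).
Qed.
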